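(* Let $X_t$ and $Y_t$ be two independent real-valued Lévy processes and assume $X_t$ has the local coupling property. Then the Lévy process $X_t+Y_t$ has the local coupling property.
   Context: A real-valued Lévy process is regarded as a Markov process on $\mathbb{R}$. The local coupling property: for every $x\in\mathbb{R}$ and $\epsilon>0$ there exists $\delta>0$ such that for every $y$ with $|y-x|<\delta$ there is a coupling $(X_t,Y_t)$ of the laws of the process started at $x$ and at $y$, such that $T=\inf\{t\ge0:X_t=Y_t\}$ satisfies $P(T>\epsilon)<\epsilon$. *)

From HB Require Import structures.
From mathcomp Require Import all_boot all_order all_algebra.
From mathcomp Require Import all_classical all_reals all_analysis.

Set Implicit Arguments.
Unset Strict Implicit.
Unset Printing Implicit Defensive.

Import Order.TTheory GRing.Theory Num.Theory.
Import numFieldNormedType.Exports.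
Local Open Scope classical_set_scope.
Local Open Scope ring_scope.

(* A real-valued stochastic process indexed by time t >= 0 is modelled as
   X : R -> Omega -> R; only the values at t >= 0 are ever used. *)

Definition cadlag_paths (R : realType) (Omega : Type) (X : R -> Omega -> R) :=
  forall w : Omega,
    (forall t : R, 0 <= t -> (fun s => X s w) x @[x --> t^'+] --> X t w) /\
    (forall t : R, 0 < t -> cvg ((fun s => X s w) @ t^'-)).

Definition levy_process (R : realType) (d : measure_display)
    (Omega : measurableType d) (P : probability Omega R) (X : R -> Omega -> R) :=
  [/\ (forall t : R, measurable_fun setT (X t)),
      (forall w, X 0 w = 0),
      cadlag_paths X,
      (forall (n : nat) (t : nat -> R) (B : nat -> set R),
         0 <= t 0%N ->
         (forall i : nat, (i < n)%N -> t i < t i.+1) ->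
         (forall i : nat, (i < n)%N -> measurable (B i)) ->
         P [set w | forall i : nat, (i < n)%N -> B i (X (t i.+1) w - X (t i) w)] =
         (\prod_(i < n) P [set w | B i (X (t i.+1) w - X (t i) w)%R])%E) &
      (forall (s t : R) (B : set R), 0 <= s -> 0 <= t -> measurable B ->
         P [set w | B (X (t + s) w - X s w)] = P [set w | B (X t w)])].

Definition process_sigma (R : realType) (Omega : Type) (X : R -> Omega -> R)
  : set (set Omega) :=
  <<s [set A | exists t : R, exists B : set R,
                 [/\ 0 <= t, measurable B & A = X t @^-1` B]] >>.

Definition independent_processes (R : realType) (d : measure_display)
    (Omega : measurableType d) (P : probability Omega R) (X Y : R -> Omega -> R) :=
  forall A B : set Omega, process_sigma X A -> process_sigma Y B ->
    P (A `&` B) = (P A * P B)%E.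

(* The process U (on (Omega', P')) has the law of the process X started at x,
   i.e. of (x + X t)_{t >= 0} on (Omega, P): all finite-dimensional
   distributions agree (for cadlag processes these determine the law on
   path space). *)
Definition same_fdd (R : realType)
    (d : measure_display) (Omega : measurableType d) (P : probability Omega R)
    (X : R -> Omega -> R) (x : R)
    (d' : measure_display) (Omega' : measurableType d') (P' : probability Omega' R)
    (U : R -> Omega' -> R) :=
  forall (n : nat) (t : 'I_n -> R) (B : 'I_n -> set R),
    (forall i, 0 <= t i) -> (forall i, measurable (B i)) ->
    P' [set w | forall i, B i (U (t i) w)] =
    P [set w | forall i, B i (x + X (t i) w)].

(* coupling time T = inf {t >= 0 : U t = V t} (inf of the empty set = +oo) *)
Definition coupling_time (R : realType) (Omega : Type)
    (U V : R -> Omega -> R) (w : Omega) : \bar R :=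
  ereal_inf [set t%:E | t in [set t : R | 0 <= t /\ U t w = V t w]].

(* The probability P(T > eps) is read as an outer
   probability (it is the genuine probability whenever {T > eps} is
   measurable). *)
Definition local_coupling (R : realType) (d : measure_display)
    (Omega : measurableType d) (P : probability Omega R) (X : R -> Omega -> R) :=
  forall (x eps : R), 0 < eps ->
  exists2 delta : R, 0 < delta &
  forall y : R, `|y - x| < delta ->
    exists (d' : measure_display) (Omega' : measurableType d')
           (P' : probability Omega' R) (U V : R -> Omega' -> R),
      [/\ (forall t, measurable_fun setT (U t) /\ measurable_fun setT (V t)),
          cadlag_paths U /\ cadlag_paths V,
          same_fdd P X x P' U,
          same_fdd P X y P' V &
          (exists A : set Omega', [/\ measurable A,
             [set w | (eps%:E < coupling_time U V w)%E] `<=` A &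
             (P' A < eps%:E)%E])].

(** Take a coupling (U, V) of X started at x and at y, on some space Omega',
    and let Y run independently of it: on Omega x Omega' put
    U' = U + Y and V' = V + Y.  Then U' = V' exactly when U = V, so the
    coupling time does not change.  To see that U' has the finite-dimensional
    distributions of x + X + Y, condition on the Y-coordinate: for fixed Y the
    section of the event is an event about U alone, which has the same
    probability as the corresponding event about x + X; integrating over Y
    yields the product of P with itself, and independence of X and Y says
    that on sigma(Y) x sigma(X) this product agrees with the image of P under
    the diagonal map w |-> (w, w). *)
From HB Require Import structures.
From mathcomp Require Import all_boot all_order all_algebra.
From mathcomp Require Import all_classical all_reals all_analysis.

Import Order.TTheory GRing.Theory Num.Theory.
Import numFieldNormedType.Exports.
Local Open Scope classical_set_scope.
Local Open Scope ring_scope.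

Set Implicit Arguments.
Unset Strict Implicit.
Unset Printing Implicit Defensive.

Lemma process_sigma_measurable (R : realType) d (Omega : measurableType d)
    (Z : R -> Omega -> R) :
  (forall t, measurable_fun setT (Z t)) -> process_sigma Z `<=` measurable.
Proof.
move=> mZ; apply: smallest_sub; first exact: sigma_algebra_measurable.
by move=> _ [t [B [_ mB ->]]]; rewrite -[X in measurable X]setTI; apply: mZ.
Qed.

Lemma product_measure_setTX (R : realType) d d' (T : measurableType d)
    (T' : measurableType d') (P : probability T R) (P' : probability T' R)
    (A : set T') :
  measurable A -> (P \x P')%E (setT `*` A) = P' A.
Proof.
move=> mA; rewrite product_measure1E // -[RHS]mul1e.
by congr (_ * _)%E; exact: probability_setT.
Qed.

Section independent_pair.
Context (R : realType) (d : measure_display) (Omega : measurableType d)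
  (P : probability Omega R) (X Y : R -> Omega -> R).
Hypothesis mX : forall t, measurable_fun setT (X t).
Hypothesis mY : forall t, measurable_fun setT (Y t).
Hypothesis XY_indep : independent_processes P X Y.

Definition diag (w : Omega) : Omega * Omega := (w, w).

Lemma measurable_diag : measurable_fun setT diag.
Proof. exact: measurable_fun_pair. Qed.

Definition YX_rectangles : set (set (Omega * Omega)) :=
  [set C | exists A B, [/\ process_sigma Y A, process_sigma X B & C = A `*` B]].

Lemma YX_rectangles_measurable : YX_rectangles `<=` measurable.
Proof.
move=> _ [A [B [YA XB ->]]].
by apply: measurableX; [exact: (process_sigma_measurable mY)|
                        exact: (process_sigma_measurable mX)].
Qed.

Lemma YX_rectanglesI : setI_closed YX_rectangles.
Proof.
move=> _ _ [A1 [B1 [YA1 XB1 ->]]] [A2 [B2 [YA2 XB2 ->]]].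
exists (A1 `&` A2), (B1 `&` B2); split; last by rewrite setXI.
- exact: (@measurableI _ (g_sigma_algebraType _)).
- exact: (@measurableI _ (g_sigma_algebraType _)).
Qed.

Lemma YX_rectanglesT : YX_rectangles setT.
Proof.
by exists setT, setT; rewrite setXTT; split => //;
  exact: (@measurableT _ (g_sigma_algebraType _)).
Qed.

Lemma product_measure_diag S :
  <<s YX_rectangles >> S -> (P \x P)%E S = P (diag @^-1` S).
Proof.
apply: (g_sigma_algebra_measure_unique YX_rectangles
  YX_rectangles_measurable (fun=> setT)
  (fun=> YX_rectanglesT) _ (P \x P)%E (pushforward P diag) YX_rectanglesI).
- by rewrite bigcup_const.
- exact: measurable_diag.
- move=> ? _ [A [B [YA XB ->]]].
  apply: eq_trans (product_measure1E _ _ (process_sigma_measurable mY YA)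
                                        (process_sigma_measurable mX XB)) _.
  by rewrite -[RHS]/(P (A `&` B)) setIC XY_indep // muleC.
- by move=> _; apply: le_lt_trans (probability_le1 (P \x P)%E measurableT) _;
    exact: ltry.
Qed.

Let GT := g_sigma_algebraType YX_rectangles.

Lemma YX_rectangles_measurable_X t :
  0 <= t -> measurable_fun (setT : set GT) (fun p : GT => X t p.2).
Proof.
move=> t0 _ C mC; apply: sub_sigma_algebra.
exists setT, (X t @^-1` C); split.
- exact: (@measurableT _ (g_sigma_algebraType _)).
- by apply: sub_sigma_algebra; exists t, C.
- by apply/seteqP; split => p /= [].
Qed.

Lemma YX_rectangles_measurable_Y t :
  0 <= t -> measurable_fun (setT : set GT) (fun p : GT => Y t p.1).
Proof.
move=> t0 _ C mC; apply: sub_sigma_algebra.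
exists (Y t @^-1` C), setT; split.
- by apply: sub_sigma_algebra; exists t, C.
- exact: (@measurableT _ (g_sigma_algebraType _)).
- by apply/seteqP; split => p /= [].
Qed.

Lemma YX_rectangles_fdd_event n (t : 'I_n -> R) (B : 'I_n -> set R) (x : R) :
  (forall i, 0 <= t i) -> (forall i, measurable (B i)) ->
  <<s YX_rectangles >>
    [set p : Omega * Omega | forall i, B i (x + X (t i) p.2 + Y (t i) p.1)].
Proof.
move=> t0 mB.
have -> : [set p : Omega * Omega |
            forall i, B i (x + X (t i) p.2 + Y (t i) p.1)] =
    \bigcap_(i in setT)
        ((fun p : GT => x + X (t i) p.2 + Y (t i) p.1) @^-1` B i).
  by apply/seteqP; split => p /= h i => [_|]; exact: h.
apply: (@fin_bigcap_measurable _ GT); first exact: finite_finset.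
move=> i _; rewrite -[X in measurable X]setTI.
apply: measurable_realfun.measurable_funD => //.
  apply: measurable_realfun.measurable_funD; first exact: measurable_cst.
  exact: YX_rectangles_measurable_X.
exact: YX_rectangles_measurable_Y.
Qed.

Lemma same_fdd_add_independent d' (Omega' : measurableType d')
    (P' : probability Omega' R) (U : R -> Omega' -> R) (x : R) :
  same_fdd P X x P' U ->
  same_fdd P (fun t w => X t w + Y t w) x (P \x P')%E
    (fun t p => U t p.2 + Y t p.1).
Proof.
move=> UX n t B t0 mB.
pose By i (w : Omega) := [set a | B i (a + Y (t i) w)].
have mBy i w : measurable (By i w).
  rewrite -[X in measurable X]setTI.
  by apply: measurable_realfun.measurable_funD => //; exact: measurable_cst.
transitivity ((P \x P)%E
  [set p : Omega * Omega | forall i, B i (x + X (t i) p.2 + Y (t i) p.1)]).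
  apply: eq_integral => w _ /=.
  rewrite /xsection /=.
  under eq_set do rewrite in_setE /=.
  under [in RHS]eq_set do rewrite in_setE /=.
  exact: (UX n t (By ^~ w)).
rewrite product_measure_diag; last exact: YX_rectangles_fdd_event.
by congr (P _); apply/seteqP; split => w /= h i; have := h i; rewrite addrA.
Qed.

End independent_pair.

Lemma measurable_fun_add_pair (R : realType) d1 d2 (T1 : measurableType d1)
    (T2 : measurableType d2) (f : T2 -> R) (g : T1 -> R) :
  measurable_fun setT f -> measurable_fun setT g ->
  measurable_fun setT (fun p : T1 * T2 => f p.2 + g p.1).
Proof.
move=> mf mg; apply: measurable_realfun.measurable_funD.
- exact: measurableT_comp mf measurable_snd.
- exact: measurableT_comp mg measurable_fst.
Qed.

Lemma cadlag_paths_add (R : realType) (O1 O2 : Type)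
    (U : R -> O2 -> R) (Y : R -> O1 -> R) :
  cadlag_paths U -> cadlag_paths Y ->
  cadlag_paths (fun t (p : O1 * O2) => U t p.2 + Y t p.1).
Proof.
move=> cU cY [w w']; split => t t0.
- by apply: cvgD; [exact: (cU w').1|exact: (cY w).1].
- by apply: is_cvgD; [exact: (cU w').2|exact: (cY w).2].
Qed.

Lemma coupling_time_addr (R : realType) (O1 O2 : Type)
    (U V : R -> O2 -> R) (Y : R -> O1 -> R) (p : O1 * O2) :
  coupling_time (fun t (p : O1 * O2) => U t p.2 + Y t p.1)
    (fun t (p : O1 * O2) => V t p.2 + Y t p.1) p = coupling_time U V p.2.
Proof.
congr ereal_inf; congr image; apply/seteqP.
by split => s /= [s0 e]; split => //; [exact: addIr e|rewrite e].
Qed.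

Theorem corollary3p4 (R : realType) (d : measure_display)
    (Omega : measurableType d) (P : probability Omega R)
    (X Y : R -> Omega -> R) :
  levy_process P X -> levy_process P Y ->
  independent_processes P X Y ->
  local_coupling P X ->
  local_coupling P (fun t w => X t w + Y t w).
Proof.
move=> [mX _ _ _ _] [mY _ cY _ _] XY_indep lcX x eps eps0.
have [delta delta0 coupleX] := lcX x eps eps0.
exists delta => // y xy.
have [d' [Om' [P' [U [V [mUV [cU cV] UX VX [A [mA TA PA]]]]]]]] := coupleX y xy.
exists (measure_prod_display (d, d')), (Omega * Om')%type, (P \x P')%E,
  (fun t p => U t p.2 + Y t p.1), (fun t p => V t p.2 + Y t p.1).
split.
- by move=> t; split; apply: measurable_fun_add_pair => //; case: (mUV t).
- by split; apply: cadlag_paths_add.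
- exact: same_fdd_add_independent.
- exact: same_fdd_add_independent.
- exists (setT `*` A); split; first exact: measurableX.
  + move=> p /= Tp; split => //; apply: TA.
    by rewrite /= -(coupling_time_addr U V Y p).
  + by move: PA; rewrite -(product_measure_setTX P P' mA).
Qed.
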